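(* Let $G$ be a group, $A$ an additive abelian group with a right $G$-action by group automorphisms, $n\in\mathbb Z_+$ and $a\in\mathcal P_n(G,A)$. Then $D^na$ is an $n$-cocycle of $G$ with values in $A^G$: it lies in $\mathcal C^n(G,A^G)$ and $\delta^nD^na=0$.
   Context: Right action: $a\mapsto a^g$, $a^{\mathbf e}=a$, $(a^g)^h=a^{gh}$, additive in $a$; $\mathbf e$ the identity. $A^G=\{a:a^g=a\ \forall g\}$. $\mathcal C^0(G,M)=M$; for $n\ge1$, $\mathcal C^n(G,M)$ is the group of functions $G^n\to M$ vanishing whenever some argument is $\mathbf e$. For $n\ge1$, $(d_nc)(g_1,\dots,g_n)=[c(g_1,\dots,g_{n-1})]^{g_n}-c(g_1,\dots,g_{n-1})$; $D^0=\mathrm{id}_A$, $D^n=d_nD^{n-1}$; $\mathcal P_n(G,A)=\ker D^{n+1}$. Coboundary (trivial left action): $[\delta^nc](g_1,\dots,g_{n+1})=c(g_2,\dots,g_{n+1})+\sum_{i=1}^{n}(-1)^ic(g_1,\dots,g_ig_{i+1},\dots,g_{n+1})+(-1)^{n+1}c(g_1,\dots,g_n)$, with $\delta^0=0$. *)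

From mathcomp Require Import all_boot all_order all_algebra.
Set Implicit Arguments. Unset Strict Implicit. Unset Printing Implicit Defensive.
Import GRing.Theory.
Local Open Scope ring_scope.

Definition is_group (G : Type) (mul : G -> G -> G) (e : G) (inv : G -> G) : Prop :=
  [/\ forall x y z, mul x (mul y z) = mul (mul x y) z,
      forall x, mul e x = x,
      forall x, mul x e = x,
      forall x, mul (inv x) x = e &
      forall x, mul x (inv x) = e].

(* A right action a |-> a^g of G on the abelian group A by additive maps
   (hence by group automorphisms). *)
Definition is_right_action (G : Type) (mul : G -> G -> G) (e : G)
  (A : zmodType) (act : A -> G -> A) : Prop :=
  [/\ forall a, act a e = a,
      forall a g h, act (act a g) h = act a (mul g h) &
      forall g, forall a b, act (a + b) g = act a g + act b g].

Definition fixed_pts (G : Type) (A : zmodType) (act : A -> G -> A) (a : A) : Prop :=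
  forall g, act a g = a.

(* Elements of G^n are represented by sequences s with size s = n.
   D a s = (D^n a)(g_1,...,g_n) for s = [:: g_1; ...; g_n], where
   D^0 a = a and D^n a (g_1..g_n) = [D^{n-1} a (g_1..g_{n-1})]^{g_n} - D^{n-1} a (g_1..g_{n-1}). *)
Definition Dop (G : Type) (A : zmodType) (act : A -> G -> A) (a : A) (s : seq G) : A :=
  foldl (fun x g => act x g - x) a s.

Definition Pn (G : Type) (A : zmodType) (act : A -> G -> A) (n : nat) (a : A) : Prop :=
  forall s : seq G, size s = n.+1 -> Dop act a s = 0.

Definition in_Cn (G : Type) (e : G) (A : zmodType) (act : A -> G -> A)
  (n : nat) (c : seq G -> A) : Prop :=
  (forall s : seq G, size s = n -> fixed_pts act (c s)) /\
  ((0 < n)%N ->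
   forall s : seq G, size s = n -> (exists2 i, (i < n)%N & nth e s i = e) -> c s = 0).

Definition sgnr (A : zmodType) (k : nat) (x : A) : A := if odd k then - x else x.

(* s with its entries i and i+1 (0-indexed) replaced by their product *)
Definition merge_at (G : Type) (mul : G -> G -> G) (e : G) (i : nat) (s : seq G) : seq G :=
  take i s ++ mul (nth e s i) (nth e s i.+1) :: drop i.+2 s.

(* Coboundary with trivial left action, evaluated at s = [:: g_1; ...; g_{n+1}]:
   c(g_2..g_{n+1}) + sum_{i=1}^n (-1)^i c(g_1,..,g_i g_{i+1},..,g_{n+1})
   + (-1)^{n+1} c(g_1..g_n). *)
Definition coboundary (G : Type) (mul : G -> G -> G) (e : G) (A : zmodType)
  (n : nat) (c : seq G -> A) (s : seq G) : A :=
  c (behead s)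
  + \sum_(i < n) sgnr i.+1 (c (merge_at mul e i s))
  + sgnr n.+1 (c (take n s)).

From mathcomp Require Import all_boot all_order all_algebra.
Local Open Scope ring_scope.
Import GRing.Theory.

(* Write a^g - a = a(g - 1), so that D^n a (g_1..g_n) = a (g_1 - 1)...(g_n - 1).
   From gh - 1 = (g - 1) + (h - 1) + (g - 1)(h - 1) one gets that D^n a, with
   the factor g_i g_{i+1} merged, is the sum of the two terms with g_{i+1}
   resp. g_i omitted plus D^{n+1} a, which vanishes for a in P_n.  The
   coboundary of D^n a therefore telescopes to 0.  The same vanishing of
   D^{n+1} a = D^n a (g - 1) says that D^n a takes values in A^G, and the
   factor e - 1 = 0 makes D^n a normalized. *)

Definition omit_nth {T : Type} (i : nat) (s : seq T) : seq T :=
  take i s ++ drop i.+1 s.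

Lemma omit_nth0 (T : Type) (s : seq T) : omit_nth 0%N s = behead s.
Proof. by rewrite /omit_nth take0 drop1. Qed.

Lemma omit_nth_last (T : Type) (n : nat) (s : seq T) :
  size s = n.+1 -> omit_nth n s = take n s.
Proof. by move=> sz_s; rewrite /omit_nth drop_oversize ?cats0 ?sz_s. Qed.

Lemma sgnrS (A : zmodType) (k : nat) (x : A) : sgnr k.+1 x = - sgnr k x.
Proof. by rewrite /sgnr /=; case: (odd k); rewrite ?opprK. Qed.

Lemma alternating_telescope (A : zmodType) (f : nat -> A) (n : nat) :
  f 0%N + \sum_(i < n) sgnr i.+1 (f i.+1 + f i) = sgnr n (f n).
Proof.
elim: n => [|n IH]; first by rewrite big_ord0 addr0.
rewrite big_ord_recr /= addrA IH !sgnrS /sgnr.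
case: (odd n); rewrite ?opprK; first by rewrite addrC addrK.
by rewrite opprD addrCA subrr addr0.
Qed.

Section Coboundary.
Context {G : Type} (mul : G -> G -> G) (e : G) {A : zmodType}.

Lemma coboundary_eq0 (n : nat) (c : seq G -> A) (s : seq G) :
  size s = n.+1 ->
  (forall i, (i < n)%N ->
     c (merge_at mul e i s) = c (omit_nth i.+1 s) + c (omit_nth i s)) ->
  coboundary mul e n c s = 0.
Proof.
move=> sz_s c_merge; rewrite /coboundary.
under eq_bigr => i _ do rewrite (c_merge i (ltn_ord i)).
rewrite -omit_nth0 (@alternating_telescope A (fun j => c (omit_nth j s))).
by rewrite omit_nth_last // sgnrS subrr.
Qed.

End Coboundary.

Section RightAction.
Context {G : Type} {mul : G -> G -> G} {e : G} {A : zmodType} {act : A -> G -> A}.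
Hypothesis act_right : is_right_action mul e act.

Lemma act1 (x : A) : act x e = x.
Proof. by case: act_right. Qed.

Lemma actM (x : A) (g h : G) : act (act x g) h = act x (mul g h).
Proof. by case: act_right. Qed.

Lemma actD (x y : A) (g : G) : act (x + y) g = act x g + act y g.
Proof. by case: act_right => _ _ ->. Qed.

Lemma act0 (g : G) : act 0 g = 0.
Proof. by apply: (addrI (act 0 g)); rewrite -actD !addr0. Qed.

Lemma actN (x : A) (g : G) : act (- x) g = - act x g.
Proof. by apply: (addrI (act x g)); rewrite -actD !subrr act0. Qed.

Lemma actB (x y : A) (g : G) : act (x - y) g = act x g - act y g.
Proof. by rewrite actD actN. Qed.

Lemma Dop_cat (x : A) (u v : seq G) : Dop act x (u ++ v) = Dop act (Dop act x u) v.
Proof. exact: foldl_cat. Qed.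

Lemma Dop_rcons (x : A) (s : seq G) (g : G) :
  Dop act x (rcons s g) = act (Dop act x s) g - Dop act x s.
Proof. by rewrite -cats1 Dop_cat. Qed.

Lemma Dop0 (s : seq G) : Dop act 0 s = 0.
Proof. by elim: s => //= g s; rewrite act0 subr0. Qed.

Lemma DopD (x y : A) (s : seq G) : Dop act (x + y) s = Dop act x s + Dop act y s.
Proof.
elim: s x y => //= g s IH x y.
by rewrite -IH actD opprD addrACA.
Qed.

Lemma Dop_cat_unit (x : A) (u v : seq G) : Dop act x (u ++ e :: v) = 0.
Proof. by rewrite Dop_cat /= act1 subrr Dop0. Qed.

Lemma Dop_cat_mul (x : A) (u v : seq G) (g h : G) :
  Dop act x (u ++ mul g h :: v) =
  Dop act x (u ++ g :: v) + Dop act x (u ++ h :: v) + Dop act x (u ++ g :: h :: v).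
Proof.
rewrite !Dop_cat /= -!DopD; congr Dop.
rewrite actB actM; set y := Dop act x u.
by rewrite [RHS]addrC addrA subrK addrA subrK.
Qed.

Lemma Dop_merge_at (x : A) (i : nat) (s : seq G) :
  (i.+1 < size s)%N ->
  Dop act x (merge_at mul e i s) =
  Dop act x (omit_nth i.+1 s) + Dop act x (omit_nth i s) + Dop act x s.
Proof.
move=> lt_i1s; have lt_is : (i < size s)%N := ltnW lt_i1s.
have def_s : s = take i s ++ nth e s i :: nth e s i.+1 :: drop i.+2 s.
  by rewrite -(drop_nth e lt_i1s) -(drop_nth e lt_is) cat_take_drop.
rewrite /merge_at Dop_cat_mul -def_s /omit_nth (drop_nth e lt_i1s).
by rewrite (take_nth e lt_is) -cats1 -catA.
Qed.

End RightAction.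

Theorem corollary1p22 (G : Type) (mul : G -> G -> G) (e : G) (inv : G -> G)
  (A : zmodType) (act : A -> G -> A) (n : nat) (a : A) :
  is_group mul e inv ->
  is_right_action mul e act ->
  (0 < n)%N ->
  Pn act n a ->
  in_Cn e act n (Dop act a) /\
  (forall s : seq G, size s = n.+1 -> coboundary mul e n (Dop act a) s = 0).
Proof.
move=> _ act_right _ a_Pn; split; first split.
- move=> s sz_s g; apply/eqP; rewrite -subr_eq0 -Dop_rcons.
  by rewrite a_Pn // size_rcons sz_s.
- move=> _ s sz_s [i lt_in s_i_unit].
  have lt_is : (i < size s)%N by rewrite sz_s.
  by rewrite -(cat_take_drop i s) (drop_nth e lt_is) s_i_unit (Dop_cat_unit act_right).
move=> s sz_s; apply: coboundary_eq0 => // i lt_in.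
by rewrite (Dop_merge_at act_right) ?sz_s // (a_Pn s) ?addr0.
Qed.
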